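(* Let $G$ be a finite $p$-group, $k=\mathbb F_p$, and $N$ a normal subgroup of $G$. (1) If $\gamma_i^G(N)\subseteq {\mathrm D}_i(N)$ for every $i\ge2$, then $\mathcal J^n(N,G)=\mathcal I(N)^n\mathcal I(G)$ for every $n\ge1$. (2) If $[G,N]\subseteq N^p$, then $\gamma_i^G(N)\subseteq{\mathrm D}_i(N)$ for every $i\ge2$.
   Context: $\mathcal I(X)$ is the augmentation ideal of $kX$, viewed inside $kG$. $\mathcal J^1(N,G)=\mathcal I(N)\mathcal I(G)$, $\mathcal J^{n+1}(N,G)=\mathcal I(N)\mathcal J^n(N,G)+\mathcal J^n(N,G)\mathcal I(N)$. $\gamma_1^G(N)=G$, $\gamma_{n+1}^G(N)=[\gamma_n^G(N),N]$. ${\mathrm D}_i(N)=\prod_{jp^l\ge i}\gamma_j(N)^{p^l}$ is the $i$-th Jennings subgroup of $N$, and $N^p=\langle x^p:x\in N\rangle$. *)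

From HB Require Import structures.
From mathcomp Require Import all_boot all_order all_algebra all_fingroup all_solvable.
From Stdlib Require Import ClassicalEpsilon.
Set Implicit Arguments. Unset Strict Implicit. Unset Printing Implicit Defensive.
Import GRing.Theory.

Definition asb (P : Prop) : bool :=
  if excluded_middle_informative P then true else false.

Section GroupAlgebra.
Variables (p : nat) (gT : finGroupType).

(* The group algebra k[gT], k = F_p, as the F_p-vector space of functions
   gT -> F_p, with the convolution product.  For a subgroup G of gT, kG is the
   subalgebra of functions supported on G; all ideals below live inside it. *)
Definition kalg := {ffun gT -> GRing.regular 'F_p}.

Local Open Scope ring_scope.

Definition gelt (x : gT) : kalg := [ffun y => (y == x)%:R].

Definition gmul (f g : kalg) : kalg :=
  [ffun z => \sum_(x : gT) f x * g ((x^-1 * z)%g)].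

Definition vprod (U V : {vspace kalg}) : {vspace kalg} :=
  <<[seq gmul u v | u <- enum [pred u : kalg | u \in U],
                    v <- enum [pred v : kalg | v \in V]]>>%VS.

Definition augI (X : {set gT}) : {vspace kalg} :=
  <<[seq gelt x - gelt 1%g | x <- enum X]>>%VS.

Fixpoint vpow (U : {vspace kalg}) (n : nat) : {vspace kalg} :=
  match n with
  | 0 => <<[:: gelt 1%g]>>%VS
  | n'.+1 => vprod U (vpow U n')
  end.

Fixpoint relJ (N G : {set gT}) (n : nat) : {vspace kalg} :=
  match n with
  | 0 | 1 => vprod (augI N) (augI G)
  | n'.+1 => (vprod (augI N) (relJ N G n') + vprod (relJ N G n') (augI N))%VS
  end.

End GroupAlgebra.

Arguments gelt p {gT} x.
Arguments gmul {p gT} f g.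
Arguments vprod {p gT} U V.
Arguments augI p {gT} X.
Arguments vpow {p gT} U n.
Arguments relJ p {gT} N G n.

Section Groups.
Variable gT : finGroupType.
Local Open Scope group_scope.

Fixpoint relgamma (G N : {set gT}) (n : nat) : {set gT} :=
  match n with
  | 0 | 1 => G
  | n'.+1 => [~: relgamma G N n', N]
  end.

Definition powgrp (H : {set gT}) (m : nat) : {set gT} := <<[set x ^+ m | x in H]>>.

(* Jennings subgroup D_i(N) = prod_{j >= 1, l >= 0, j p^l >= i} gamma_j(N)^{p^l},
   i.e. the subgroup generated by all these subgroups (gamma_j = 'L_j). *)
Definition jennings (p : nat) (N : {set gT}) (i : nat) : {set gT} :=
  <<[set x | asb (exists j l : nat,
                   [/\ 1 <= j, i <= j * p ^ l & x \in powgrp 'L_j(N) (p ^ l)])]>>.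

End Groups.

From mathcomp Require Import all_boot all_order all_algebra all_fingroup all_solvable.
From Stdlib Require Import ClassicalEpsilon.
From mathcomp Require Import zify ring.
Set Implicit Arguments. Unset Strict Implicit. Unset Printing Implicit Defensive.
Import GRing.Theory.

(* (1) Over F_p, the y in N with y - 1 in I(N)^2 form a subgroup containing all
   commutators and all p-th powers of N, hence D_2(N) >= [G, N].  For g in G and
   x in N, (g - 1)(x - 1) = (x^(g^-1) - 1)(g - 1) + x([x, g^-1] - 1), so
   I(G)I(N) <= I(N)I(G) + I(N)^2, and induction on n collapses J^n(N,G) to
   I(N)^n I(G).
   (2) F_k = <L_k(N)^p, L_(k+1)(N)> lies in D_(k+1)(N) and [F_k, N] <= F_(k+1),
   because [a^p, n] = [a, n]^p modulo L_(k+2)(N) for a in L_k(N).  As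
   gamma_2^G(N) = [G, N] <= N^p <= F_1, induction gives gamma_(k+1)^G(N) <= F_k. *)

Section Commutators.
Variable gT : finGroupType.
Implicit Types (A B S : {set gT}) (C K N : {group gT}).
Local Open Scope group_scope.

Lemma commg_subP A B C :
  (forall a b, a \in A -> b \in B -> [~ a, b] \in C) -> [~: A, B] \subset C.
Proof.
by move=> H; rewrite gen_subG; apply/subsetP=> _ /imset2P[a b Ha Hb ->]; exact: H.
Qed.

Lemma commg_gen_subP S N C : S \subset N -> N \subset 'N(C) ->
  (forall s n, s \in S -> n \in N -> [~ s, n] \in C) -> [~: <<S>>, N] \subset C.
Proof.
move=> sSN nCN H.
have nSC : <<S>> \subset 'N(C) by rewrite gen_subG (subset_trans sSN).
rewrite -sub_astabQR // gen_subG sub_astabQR ?(subset_trans sSN) //.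
exact: commg_subP.
Qed.

Lemma expgMn_mod K x c n : x \in 'N(K) -> c \in 'N(K) -> [~ c, x] \in K ->
  (c ^+ n)^-1 * (x ^+ n)^-1 * (x * c) ^+ n \in K.
Proof.
move=> nx nc cx; apply: coset_idr; first by rewrite !(groupM, groupV, groupX).
have cxc : commute (coset K x) (coset K c).
  apply/esym/commgP; rewrite -morphR //; apply/eqP; exact: coset_id.
rewrite !morphM ?morphV ?morphX ?groupM ?groupV ?groupX // ?groupM //.
by rewrite morphM // expgMn // -mulgA mulKg mulVg.
Qed.

Lemma commXg_mod K a y n :
  a \in 'N(K) -> [~ a, y] \in 'N(K) -> [~ [~ a, y], a] \in K ->
  [~ a ^+ n, y] \in [~ a, y] ^+ n *: K.
Proof.
move=> na nc cK; have := expgMn_mod n na nc cK.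
rewrite (_ : a * [~ a, y] = a ^ y); last by rewrite commgEl mulKVg.
rewrite -conjXg -mulgA -commgEl => H.
by apply/lcosetP; exists (([~ a, y] ^+ n)^-1 * [~ a ^+ n, y]); rewrite ?mulKVg.
Qed.

End Commutators.

Section JenningsFiltration.
Variables (gT : finGroupType) (p : nat) (N : {group gT}).
Local Open Scope group_scope.

Lemma powgrp_sub (H : {group gT}) m : powgrp H m \subset H.
Proof. by rewrite gen_subG; apply/subsetP=> _ /imsetP[x Hx ->]; rewrite groupX. Qed.

Lemma powgrp_norm (H : {group gT}) m : H <| N -> N \subset 'N(powgrp H m).
Proof.
move=> /andP[_ nHN]; apply: norms_gen; apply/subsetP=> n Hn; rewrite inE.
apply/subsetP=> _ /imsetP[_ /imsetP[x Hx ->] ->].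
apply/imsetP; exists (x ^ n); last by rewrite conjXg.
by rewrite memJ_norm // (subsetP nHN).
Qed.

Lemma mem_jennings i j l x : 1 <= j -> i <= j * p ^ l ->
  x \in powgrp 'L_j(N) (p ^ l) -> x \in jennings p N i.
Proof.
move=> j_gt0 le_ij Hx; apply: mem_gen; rewrite inE /asb.
by case: excluded_middle_informative => // [[]]; exists j, l.
Qed.

Definition pfilt k := <<powgrp 'L_k(N) p :|: 'L_k.+1(N)>>.

Lemma pfilt_norm k : N \subset 'N(pfilt k).
Proof.
apply/norms_gen/normsU; first exact/powgrp_norm/lcn_normal.
by case/andP: (lcn_normal k.+1 N).
Qed.

Lemma pfilt_sub k : pfilt k \subset N.
Proof.
rewrite gen_subG subUset lcn_sub andbT.
exact: subset_trans (powgrp_sub _ _) (lcn_sub _ _).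
Qed.

Lemma lcnS_pfilt k : 'L_k.+1(N) \subset pfilt k.
Proof. exact: subset_trans (subsetUr _ _) (sub_gen _). Qed.

Lemma commg_powgrp_pfilt k : [~: powgrp 'L_k(N) p, N] \subset pfilt k.+1.
Proof.
have sLN := subsetP (lcn_sub k N).
apply: commg_gen_subP; [|exact: pfilt_norm|].
  by apply/subsetP=> _ /imsetP[x Hx ->]; rewrite groupX ?sLN.
move=> _ n /imsetP[a Ha ->] Nn.
have Na := sLN a Ha.
have nL := subsetP (normal_norm (lcn_normal k.+2 N)).
have Lan : [~ a, n] \in 'L_k.+1(N) by exact: (subsetP (lcnSnS _ _)) (mem_commg Ha Nn).
have Nan : [~ a, n] \in N by exact: (subsetP (lcn_sub k.+1 N)) _ Lan.
have : [~ [~ a, n], a] \in 'L_k.+2(N) by exact: (subsetP (lcnSnS _ _)) (mem_commg Lan Na).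
case/(commXg_mod p (nL _ Na) (nL _ Nan))/lcosetP=> z Lz ->.
rewrite groupM //; last exact: (subsetP (lcnS_pfilt _)).
by apply/mem_gen/setUP; left; apply/mem_gen/imsetP; exists [~ a, n].
Qed.

Lemma commg_pfilt k : [~: pfilt k, N] \subset pfilt k.+1.
Proof.
apply: commg_gen_subP; [|exact: pfilt_norm|].
  by rewrite -gen_subG pfilt_sub.
move=> s n /setUP[Hs|Hs] Nn; first exact: (subsetP (commg_powgrp_pfilt k)) (mem_commg Hs Nn).
by apply: (subsetP (lcnS_pfilt _)); exact: (subsetP (lcnSnS _ _)) (mem_commg Hs Nn).
Qed.

Lemma pfilt_jennings k : 1 < p -> 0 < k -> pfilt k \subset jennings p N k.+1.
Proof.
move=> p_gt1 k_gt0; rewrite gen_subG subUset; apply/andP; split; apply/subsetP=> x Hx.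
  by apply: (@mem_jennings k.+1 k 1) => //; rewrite expn1; nia.
apply: (@mem_jennings k.+1 k.+1 0) => //; first by rewrite expn0 muln1.
by apply/mem_gen/imsetP; exists x; rewrite ?expn0 ?expg1.
Qed.

Lemma relgamma_sub_jennings (G : {group gT}) : 1 < p ->
  [~: G, N] \subset powgrp N p ->
  forall i, 2 <= i -> relgamma G N i \subset jennings p N i.
Proof.
move=> p_gt1 sGN_Np [|[|k]] // _.
apply: subset_trans (pfilt_jennings p_gt1 (ltn0Sn k)).
elim: k => [|k IHk]; last exact: subset_trans (commSg _ IHk) (commg_pfilt _).
apply: subset_trans sGN_Np _; rewrite /pfilt lcn1.
exact: subset_trans (subsetUl _ _) (sub_gen _).
Qed.

End JenningsFiltration.

Section GroupAlgebraProducts.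
Variables (p : nat) (gT : finGroupType).
Local Open Scope ring_scope.
Local Notation kalg := (kalg p gT).
Implicit Types (f g h : kalg) (U V W : {vspace kalg}).

Lemma gmulDl f1 f2 g : gmul (f1 + f2) g = gmul f1 g + gmul f2 g.
Proof.
by apply/ffunP=> z; rewrite !ffunE -big_split; apply: eq_bigr=> x _; rewrite !ffunE mulrDl.
Qed.

Lemma gmulDr f g1 g2 : gmul f (g1 + g2) = gmul f g1 + gmul f g2.
Proof.
by apply/ffunP=> z; rewrite !ffunE -big_split; apply: eq_bigr=> x _; rewrite !ffunE mulrDr.
Qed.

Lemma gmulZl c f g : gmul (c *: f) g = c *: gmul f g.
Proof.
by apply/ffunP=> z; rewrite !ffunE scaler_sumr; apply: eq_bigr=> x _; rewrite ffunE -scalerAl.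
Qed.

Lemma gmulZr c f g : gmul f (c *: g) = c *: gmul f g.
Proof.
by apply/ffunP=> z; rewrite !ffunE scaler_sumr; apply: eq_bigr=> x _; rewrite ffunE -scalerAr.
Qed.

Lemma gmulBl f1 f2 g : gmul (f1 - f2) g = gmul f1 g - gmul f2 g.
Proof. by rewrite gmulDl -scaleN1r gmulZl scaleN1r. Qed.

Lemma gmulBr f g1 g2 : gmul f (g1 - g2) = gmul f g1 - gmul f g2.
Proof. by rewrite gmulDr -scaleN1r gmulZr scaleN1r. Qed.

Lemma gmul_suml I (r : seq I) (P : pred I) (F : I -> kalg) g :
  gmul (\sum_(i <- r | P i) F i) g = \sum_(i <- r | P i) gmul (F i) g.
Proof.
apply: (big_morph (gmul^~ g) (fun f1 f2 => gmulDl f1 f2 g)).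
by apply/ffunP=> z; rewrite !ffunE big1 // => x _; rewrite ffunE mul0r.
Qed.

Lemma gmul_sumr I (r : seq I) (P : pred I) (F : I -> kalg) f :
  gmul f (\sum_(i <- r | P i) F i) = \sum_(i <- r | P i) gmul f (F i).
Proof.
apply: (big_morph (gmul f) (gmulDr f)).
by apply/ffunP=> z; rewrite !ffunE big1 // => x _; rewrite ffunE mulr0.
Qed.

Lemma gmul_gelt (a b : gT) : gmul (gelt p a) (gelt p b) = gelt p (a * b)%g.
Proof.
apply/ffunP=> z; rewrite !ffunE (bigD1 a) //= big1 => [|x /negbTE xa]; last first.
  by rewrite !ffunE xa mul0r.
by rewrite !ffunE eqxx mul1r addr0 -(inj_eq (mulgI a)) mulKVg.
Qed.

Lemma gmulA f g h : gmul (gmul f g) h = gmul f (gmul g h).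
Proof.
apply/ffunP=> z; rewrite !ffunE.
under eq_bigr do rewrite ffunE mulr_suml.
rewrite exchange_big /=; apply: eq_bigr=> y _.
rewrite ffunE mulr_sumr (reindex_inj (mulgI y)) /=; apply: eq_bigr=> w _.
by rewrite mulKg invMg mulgA mulrA.
Qed.

Lemma gmulr1 f : gmul f (gelt p 1%g) = f.
Proof.
apply/ffunP=> z; rewrite !ffunE (bigD1 z) //= big1 => [|x /negbTE xz]; last first.
  rewrite !ffunE; case: eqP => [/(canRL (mulKVg x)) | _]; last by rewrite mulr0.
  by rewrite mulg1 => zx; rewrite zx eqxx in xz.
by rewrite !ffunE mulVg eqxx mulr1 addr0.
Qed.

Lemma gmul1r f : gmul (gelt p 1%g) f = f.
Proof.
apply/ffunP=> z; rewrite !ffunE (bigD1 1%g) //= big1 => [|x /negbTE x1]; last first.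
  by rewrite !ffunE x1 mul0r.
by rewrite !ffunE eqxx mul1r invg1 mul1g addr0.
Qed.

Lemma gmul_spanl (s : seq kalg) u v W :
  u \in <<s>>%VS -> (forall a, a \in s -> gmul a v \in W) -> gmul u v \in W.
Proof.
move=> su H; rewrite [u](@coord_span _ _ _ (in_tuple s) u su) gmul_suml; apply: memv_suml=> i _.
by rewrite gmulZl memvZ // H // mem_nth.
Qed.

Lemma gmul_spanr (s : seq kalg) u v W :
  v \in <<s>>%VS -> (forall b, b \in s -> gmul u b \in W) -> gmul u v \in W.
Proof.
move=> sv H; rewrite [v](@coord_span _ _ _ (in_tuple s) v sv) gmul_sumr; apply: memv_suml=> i _.
by rewrite gmulZr memvZ // H // mem_nth.
Qed.

Lemma memv_vprod U V u v : u \in U -> v \in V -> gmul u v \in vprod U V.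
Proof. by move=> Uu Vv; apply/memv_span/allpairsP; exists (u, v); rewrite !mem_enum. Qed.

Lemma vprod_subv U V W : (forall u v, u \in U -> v \in V -> gmul u v \in W) ->
  (vprod U V <= W)%VS.
Proof.
move=> H; apply/span_subvP=> _ /allpairsP[[u v] [Uu Vv ->]].
by apply: H; [move: Uu | move: Vv]; rewrite mem_enum.
Qed.

Lemma vprod_span_subv (s t : seq kalg) W :
  (forall a b, a \in s -> b \in t -> gmul a b \in W) -> (vprod <<s>> <<t>> <= W)%VS.
Proof.
move=> H; apply: vprod_subv=> u v su tv.
by apply: (gmul_spanl su) => a sa; apply: (gmul_spanr tv) => b tb; exact: H.
Qed.

Lemma vprodS U1 U2 V1 V2 : (U1 <= U2)%VS -> (V1 <= V2)%VS ->
  (vprod U1 V1 <= vprod U2 V2)%VS.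
Proof.
move=> /subvP sU /subvP sV; apply: vprod_subv=> u v Uu Vv.
by apply: memv_vprod; [apply: sU | apply: sV].
Qed.

Lemma vprodDr U V W : (vprod U (V + W) <= vprod U V + vprod U W)%VS.
Proof.
apply: vprod_subv=> u _ Uu /memv_addP[v Vv [w Ww ->]].
by rewrite gmulDr memv_add // memv_vprod.
Qed.

Lemma vprodA U V W : vprod (vprod U V) W = vprod U (vprod V W).
Proof.
apply/eqP; rewrite eqEsubv; apply/andP; split; apply: vprod_subv=> x y Hx Hy.
  apply: (gmul_spanl Hx) => _ /allpairsP[[u v] [Uu Vv ->]].
  rewrite mem_enum in Uu; rewrite mem_enum in Vv.
  by rewrite gmulA !memv_vprod.
apply: (gmul_spanr Hy) => _ /allpairsP[[v w] [Vv Ww ->]].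
rewrite mem_enum in Vv; rewrite mem_enum in Ww.
by rewrite -gmulA !memv_vprod.
Qed.

Lemma vprodv1 U : vprod U <<[:: gelt p 1%g]>>%VS = U.
Proof.
apply/eqP; rewrite eqEsubv; apply/andP; split.
  apply: vprod_subv=> u v Uu sv; apply: (gmul_spanr sv) => b.
  by rewrite inE => /eqP ->; rewrite gmulr1.
by apply/subvP=> u Uu; rewrite -[u]gmulr1 memv_vprod // memv_span ?inE.
Qed.

Lemma vprod1v U : vprod <<[:: gelt p 1%g]>>%VS U = U.
Proof.
apply/eqP; rewrite eqEsubv; apply/andP; split.
  apply: vprod_subv=> u v su Vv; apply: (gmul_spanl su) => b.
  by rewrite inE => /eqP ->; rewrite gmul1r.
by apply/subvP=> u Uu; rewrite -[u]gmul1r memv_vprod // memv_span ?inE.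
Qed.

Lemma vpowSr U n : vprod (vpow U n) U = vpow U n.+1.
Proof. by elim: n => [|n IHn] /=; rewrite ?vprod1v ?vprodv1 // vprodA IHn. Qed.

End GroupAlgebraProducts.

Section AugmentationIdeals.
Variables (p : nat) (gT : finGroupType).
Local Open Scope ring_scope.
Local Notation e x := (@gelt p gT x).

Lemma mem_augI (X : {set gT}) x : x \in X -> e x - e 1%g \in augI p X.
Proof. by move=> Xx; apply/memv_span/mapP; exists x; rewrite ?mem_enum. Qed.

Lemma augIS (X Y : {set gT}) : X \subset Y -> (augI p X <= augI p Y)%VS.
Proof.
move=> sXY; apply/span_subvP=> _ /mapP[x Xx ->].
by rewrite mem_enum in Xx; rewrite mem_augI // (subsetP sXY).
Qed.

Lemma gmul_augI_gen x y : gmul (e x - e 1%g) (e y - e 1%g) =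
  (e (x * y)%g - e 1%g) - (e x - e 1%g) - (e y - e 1%g).
Proof.
rewrite gmulBl !gmulBr !gmul_gelt mulg1 mul1g mulg1.
by apply/ffunP=> z; rewrite !ffunE; ring.
Qed.

Lemma vprod_augI_sub (H : {group gT}) : (vprod (augI p H) (augI p H) <= augI p H)%VS.
Proof.
apply: vprod_span_subv=> _ _ /mapP[x Hx ->] /mapP[y Hy ->].
rewrite mem_enum in Hx; rewrite mem_enum in Hy.
by rewrite gmul_augI_gen; apply: memvB; first apply: memvB; apply: mem_augI; rewrite ?groupM.
Qed.

Section SquareOfAugmentation.
Variables (N : {group gT}).
Local Notation I := (augI p N).
Local Notation I2 := (vprod I I).

Lemma gmul_gelt_augI2 x q : x \in N -> q \in I2 -> gmul (e x) q \in I2.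
Proof.
move=> Nx I2q; rewrite -[e x](subrK (e 1%g)) gmulDl gmul1r memvD //.
by rewrite memv_vprod ?mem_augI // (subvP (vprod_augI_sub N)).
Qed.

Definition dim2 := [set y in N | e y - e 1%g \in I2].

Lemma dim2_group_set : group_set dim2.
Proof.
apply/group_setP; split; first by rewrite inE group1 subrr mem0v.
move=> x y; rewrite !inE => /andP[Nx I2x] /andP[Ny I2y]; rewrite groupM //=.
have -> : e (x * y)%g - e 1%g =
    gmul (e x - e 1%g) (e y - e 1%g) + (e x - e 1%g) + (e y - e 1%g).
  by rewrite gmul_augI_gen; apply/ffunP=> z; rewrite !ffunE; ring.
apply/memvD/I2y/memvD/I2x.
by apply: memv_vprod; apply: (subvP (vprod_augI_sub N)).
Qed.

Canonical dim2_group := Group dim2_group_set.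

Lemma mem_dim2_commg a b : a \in N -> b \in N -> [~ a, b]%g \in dim2.
Proof.
move=> Na Nb; rewrite inE groupR //=.
have -> : e [~ a, b]%g - e 1%g = gmul (e (b * a)^-1%g) (e (a * b)%g - e (b * a)%g).
  by rewrite gmulBr !gmul_gelt mulVg /commg /conjg invMg !mulgA.
have <- : gmul (e a - e 1%g) (e b - e 1%g) - gmul (e b - e 1%g) (e a - e 1%g)
    = e (a * b)%g - e (b * a)%g.
  by rewrite !gmul_augI_gen; apply/ffunP=> z; rewrite !ffunE; ring.
apply: gmul_gelt_augI2; first by rewrite groupV groupM.
by apply: memvB; apply: memv_vprod; apply: mem_augI.
Qed.

(* In characteristic p: y^p - 1 = (y - 1) * sum_(r < p) (y^r - 1), the constant
   terms summing to p * (1 - y) = 0. *)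
Lemma mem_dim2_expgp y : prime p -> y \in N -> (y ^+ p)%g \in dim2.
Proof.
move=> p_pr Ny; rewrite inE groupX //=.
have -> : e (y ^+ p)%g - e 1%g =
    gmul (e y - e 1%g) (\sum_(0 <= r < p) (e (y ^+ r)%g - e 1%g)).
  have telescope_term r : gmul (e y - e 1%g) (e (y ^+ r)%g - e 1%g) =
      (e (y ^+ r.+1)%g - e (y ^+ r)%g) + (e 1%g - e y).
    by rewrite gmul_augI_gen expgS; apply/ffunP=> z; rewrite !ffunE; ring.
  rewrite gmul_sumr; under eq_bigr do rewrite telescope_term.
  rewrite big_split /= telescope_sumr // sumr_const_nat subn0 expg0.
  by rewrite -scaler_nat pchar_Fp_0 // scale0r addr0.
by rewrite memv_vprod ?mem_augI // memv_suml // => r _; rewrite mem_augI ?groupX.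
Qed.

Lemma jennings2_sub_dim2 : prime p -> jennings p N 2 \subset dim2.
Proof.
move=> p_pr; rewrite -[dim2]/(gval dim2_group) gen_subG.
apply/subsetP=> x; rewrite inE /asb.
case: excluded_middle_informative => // [[j [l [j_gt0 le2_jpl Hx]]]] _.
move: x Hx; apply/subsetP; rewrite gen_subG; apply/subsetP=> _ /imsetP[y Ly ->].
case: j j_gt0 le2_jpl Ly => // [] [|j] _ le2_jpl Ly.
  case: l le2_jpl => [|l] le2_jpl; first by rewrite expn0 in le2_jpl.
  by rewrite expnSr expgM mem_dim2_expgp // groupX.
have sL2_dim2 : 'L_2(N)%g \subset dim2.
  by rewrite lcn2 -[dim2]/(gval dim2_group); apply: commg_subP; exact: mem_dim2_commg.
rewrite (subsetP sL2_dim2) // groupX //.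
exact: (subsetP (lcn_sub_leq N (isT : (2 <= j.+2)%N))) _ Ly.
Qed.

End SquareOfAugmentation.

Section RelativeAugmentation.
Variables (N G : {group gT}).
Hypotheses (p_pr : prime p) (nsNG : (N <| G)%g).
Local Notation I := (augI p N).
Local Notation A := (augI p G).

Lemma vprod_augI_commute : ([~: G, N] \subset jennings p N 2)%g ->
  (vprod A I <= vprod I A + vprod I I)%VS.
Proof.
move=> sGN_D2; case/andP: nsNG => _ nNG.
apply: vprod_span_subv=> _ _ /mapP[g Gg ->] /mapP[x Nx ->].
rewrite mem_enum in Gg; rewrite mem_enum in Nx.
have -> : gmul (e g - e 1%g) (e x - e 1%g) =
    gmul (e (x ^ g^-1)%g - e 1%g) (e g - e 1%g) + gmul (e x) (e [~ x, g^-1]%g - e 1%g).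
  rewrite !gmul_augI_gen gmulBr !gmul_gelt mulg1.
  rewrite (_ : (x ^ g^-1 * g = g * x)%g); last by rewrite conjgE invgK -mulgA mulgKV.
  rewrite (_ : (x * [~ x, g^-1] = x ^ g^-1)%g); last by rewrite commgEl mulKVg.
  by apply/ffunP=> z; rewrite !ffunE; ring.
apply: memv_add.
  by apply: memv_vprod; apply: mem_augI; rewrite ?memJ_norm ?(subsetP nNG) ?groupV.
apply: gmul_gelt_augI2 => //.
have /(subsetP (jennings2_sub_dim2 N p_pr)) : ([~ x, g^-1] \in jennings p N 2)%g.
  by rewrite (subsetP sGN_D2) // commGC mem_commg ?groupV.
by rewrite inE => /andP[].
Qed.

Lemma relJ_eq_vprod_vpow : ([~: G, N] \subset jennings p N 2)%g ->
  forall n, (0 < n)%N -> relJ p N G n = vprod (vpow I n) A.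
Proof.
move=> sGN_D2 [|n] // _; have sIA : (I <= A)%VS by rewrite augIS ?normal_sub.
have commIA := vprod_augI_commute sGN_D2.
elim: n => [|n IHn]; first by rewrite /= vprodv1.
rewrite -[relJ _ _ _ n.+2]/(vprod I (relJ p N G n.+1) + vprod (relJ p N G n.+1) I)%VS.
rewrite IHn -[vpow I n.+2]/(vprod I (vpow I n.+1)) [in RHS]vprodA; apply/addv_idPl.
set P := vpow I n.+1; have PI : vprod P I = vprod I P by rewrite vpowSr.
clearbody P.
rewrite vprodA (subv_trans (vprodS (subvv P) commIA)) //.
rewrite (subv_trans (vprodDr _ _ _)) // subv_add -!vprodA PI !vprodA subvv /=.
by apply: vprodS => //; apply: vprodS.
Qed.

End RelativeAugmentation.

End AugmentationIdeals.

Theorem mainTheorem9 (p : nat) (gT : finGroupType) (G N : {group gT}) :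
  prime p -> (p.-group G)%g -> (N <| G)%g ->
  ((forall i : nat, 2 <= i -> relgamma G N i \subset jennings p N i) ->
     forall n : nat, 1 <= n ->
       relJ p N G n = vprod (vpow (augI p N) n) (augI p G))
  /\
  (([~: G, N] \subset powgrp N p)%g ->
     forall i : nat, 2 <= i -> relgamma G N i \subset jennings p N i).
Proof.
move=> p_pr _ nsNG; split=> [sgamma_D|].
  exact: relJ_eq_vprod_vpow p_pr nsNG (sgamma_D 2 isT).
exact: relgamma_sub_jennings (prime_gt1 p_pr).
Qed.
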